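(* Let $n\ge 2$ and let $k_1,\dots,k_n$, $a_1,\dots,a_{n-1}$, $b_1,\dots,b_n$ be real or complex numbers ($3n-1$ parameters). Let $A_1$ be the $n\times n$ matrix with entries $$(A_1)_{ij}=\begin{cases} k_i b_j, & i\le j,\\ k_j a_j, & i>j.\end{cases}$$ Define $c_i=k_{i+1}b_i-k_ia_i$ for $i=1,\dots,n-1$, $c_0=1$, $c_n=b_n$; $d_i=k_{i+1}a_{i+1}b_i-k_ia_ib_{i+1}$ for $i=1,\dots,n-2$, $d_0=a_1$; $f_i=a_i-b_i$ for $i=2,\dots,n-1$; $g_i=k_{i+1}-k_i$ for $i=2,\dots,n-1$, $g_n=1$. Assume $k_1\neq 0$ and $c_i\neq 0$ for $i=1,\dots,n$. Then $A_1$ is invertible and its inverse $A_1^{-1}=[\alpha_{ij}]$ is the lower Hessenberg matrix with entries $$\alpha_{ij}=\begin{cases} \dfrac{k_{i+1}b_{i-1}-k_{i-1}a_{i-1}}{c_{i-1}c_i}, & i=j,\ i\neq 1,n,\\[2mm] \dfrac{k_2}{k_1c_1}, & i=j=1,\\[2mm] \dfrac{b_{n-1}}{c_{n-1}c_n}, & i=j=n,\\[2mm] (-1)^{i+j}\dfrac{d_{j-1}\,g_i\prod_{\nu=j+1}^{i-1}k_\nu f_\nu}{\prod_{\nu=j-1}^{i}c_\nu}, & i-j\ge 1,\\[2mm] -\dfrac{1}{c_i}, & j-i=1,\\[2mm] 0, & j-i>1, \end{cases}$$ where the empty product $\prod_{\nu=j+1}^{i-1}k_\nu f_\nu$ (case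 $i=j+1$) is taken to be $1$.
   Context: A lower Hessenberg matrix is a square matrix whose entries $(i,j)$ vanish whenever $j-i>1$. *)

From HB Require Import structures.
From mathcomp Require Import all_boot all_order all_algebra.
Set Implicit Arguments. Unset Strict Implicit. Unset Printing Implicit Defensive.
Import Order.TTheory GRing.Theory Num.Theory.
Local Open Scope ring_scope.

(* All parameter sequences k, a, b : nat -> R are indexed from 1 as in the
   paper (values at other indices are irrelevant). Matrix indices i : 'I_n
   correspond to the paper's index i+1. *)

Section Defs.
Variable R : numFieldType.
Variables (n : nat) (k a b : nat -> R).

Definition A1 : 'M[R]_n :=
  \matrix_(i < n, j < n)
    if (i <= j)%N then k i.+1 * b j.+1 else k j.+1 * a j.+1.

Definition cc (i : nat) : R :=
  if i == 0%N then 1 else if i == n then b n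
  else k i.+1 * b i - k i * a i.

Definition dd (i : nat) : R :=
  if i == 0%N then a 1%N
  else k i.+1 * a i.+1 * b i - k i * a i * b i.+1.

Definition ff (i : nat) : R := a i - b i.

Definition gg (i : nat) : R := if i == n then 1 else k i.+1 - k i.

Definition alpha (i j : nat) : R :=
  if i == j then
    (if i == 1%N then k 2%N / (k 1%N * cc 1%N)
     else if i == n then b n.-1 / (cc n.-1 * cc n)
     else (k i.+1 * b i.-1 - k i.-1 * a i.-1) / (cc i.-1 * cc i))
  else if (j < i)%N then
    (-1) ^+ (i + j) * dd j.-1 * gg i * (\prod_(j.+1 <= nu < i) (k nu * ff nu))
      / (\prod_(j.-1 <= nu < i.+1) cc nu)
  else if j == i.+1 then - (cc i)^-1
  else 0.

Definition alpha_mx : 'M[R]_n := \matrix_(i < n, j < n) alpha i.+1 j.+1.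

End Defs.

Definition lower_hessenberg (R : ringType) (n : nat) (M : 'M[R]_n) : Prop :=
  forall i j : 'I_n, (i.+1 < j)%N -> M i j = 0.

From HB Require Import structures.
From mathcomp Require Import all_boot all_order all_algebra.
From mathcomp Require Import ring zify.
Import Order.TTheory GRing.Theory Num.Theory.
Local Open Scope ring_scope.

(* We check A_1 * alpha = 1 column by column.  Row i of A_1 sends a vector x
   to k_i * (sum_{l >= i} b_l x_l) + sum_{l < i} k_l a_l x_l, so consecutive
   rows differ by g_i * (sum_{l > i} b_l x_l) + k_i f_i x_i.  For the j-th
   column x of alpha the tail sums vanish from row 1 to row j - 1 and, below
   row j, are signed ratios of the products of the k_nu f_nu and of the c_nu,
   the same ratios that make up the entries of alpha.  Hence the rows above
   j give 0, row j gives 1, the step to row j + 1 is -1, and every later step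
   cancels. *)

Section A1Inverse.
Variables (R : numFieldType) (n : nat) (k a b : nat -> R).

Local Notation c := (cc n k a b).
Local Notation d := (dd k a b).
Local Notation f := (ff a b).
Local Notation g := (gg n k).
Local Notation alpha := (alpha n k a b).

Lemma ccE i : (0 < i < n)%N -> c i = k i.+1 * b i - k i * a i.
Proof. by move=> lt_i; rewrite /cc ifF ?ifF //; apply/eqP; lia. Qed.

Lemma cc_n : (0 < n)%N -> c n = b n.
Proof. by move=> n_gt0; rewrite /cc eqxx ifF //; apply/eqP; lia. Qed.

Lemma dd_gt0 i : (0 < i)%N -> d i = k i.+1 * a i.+1 * b i - k i * a i * b i.+1.
Proof. by case: i. Qed.

Lemma ggE i : (i < n)%N -> g i = k i.+1 - k i.
Proof. by move=> lt_in; rewrite /gg ifF //; apply/eqP; lia. Qed.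

Lemma gg_n : g n = 1.
Proof. by rewrite /gg eqxx. Qed.

Lemma alpha_below i j : (j < i)%N ->
  alpha i j = (-1) ^+ (i + j) * d j.-1 * g i
    * (\prod_(j.+1 <= nu < i) (k nu * f nu)) / \prod_(j.-1 <= nu < i.+1) c nu.
Proof. by move=> lt_ji; rewrite /alpha ifF ?lt_ji //; apply/eqP; lia. Qed.

Lemma alpha_superdiag i : alpha i i.+1 = - (c i)^-1.
Proof. by rewrite /alpha ltn_eqF // ltnNge leqnSn eqxx. Qed.

Lemma alpha_far_above i j : (i.+1 < j)%N -> alpha i j = 0.
Proof. by move=> lt_ij; rewrite /alpha !ifF //; apply/eqP; lia. Qed.

Lemma alpha_11 : alpha 1%N 1%N = k 2%N / (k 1%N * c 1%N).
Proof. by rewrite /alpha eqxx. Qed.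

Lemma alpha_nn : (1 < n)%N -> alpha n n = b n.-1 / (c n.-1 * c n).
Proof. by move=> n_gt1; rewrite /alpha eqxx ifF //; apply/eqP; lia. Qed.

Lemma alpha_diag i : (1 < i < n)%N ->
  alpha i i = (k i.+1 * b i.-1 - k i.-1 * a i.-1) / (c i.-1 * c i).
Proof. by move=> lt_i; rewrite /alpha eqxx !ifF //; apply/eqP; lia. Qed.

Lemma alpha_mx_lower_hessenberg : lower_hessenberg (alpha_mx n k a b).
Proof. by move=> i j lt_ij; rewrite mxE alpha_far_above. Qed.

Definition tailb (x : nat -> R) m := \sum_(m <= l < n.+1) b l * x l.

Definition rowA1 (x : nat -> R) i :=
  k i * tailb x i + \sum_(1 <= l < i) k l * a l * x l.

Lemma tailb_cons x m : (m <= n)%N -> tailb x m = b m * x m + tailb x m.+1.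
Proof. by move=> le_mn; rewrite /tailb big_ltn. Qed.

Lemma tailb_end x : tailb x n.+1 = 0.
Proof. by rewrite /tailb big_geq. Qed.

Lemma rowA1_1 x : rowA1 x 1%N = k 1%N * tailb x 1%N.
Proof. by rewrite /rowA1 big_geq // addr0. Qed.

Lemma rowA1S x i : (0 < i < n)%N ->
  rowA1 x i.+1 = rowA1 x i + g i * tailb x i.+1 + k i * f i * x i.
Proof.
move=> lt_i; have le_in : (i <= n)%N by lia.
rewrite /rowA1 big_nat_recr /=; last lia.
by rewrite (tailb_cons x _ le_in) ggE /ff; [ring | lia].
Qed.

Lemma mulA1E x (i : 'I_n) :
  \sum_(l < n) A1 n k a b i l * x l.+1 = rowA1 x i.+1.
Proof.
under eq_bigr do rewrite mxE.
rewrite -(big_mkord xpredT (fun l =>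
  (if (i <= l)%N then k i.+1 * b l.+1 else k l.+1 * a l.+1) * x l.+1)).
rewrite (big_cat_nat _ (n := i)) //=; last exact: ltnW.
rewrite /rowA1 /tailb !big_add1 /= addrC big_distrr /=.
congr (_ + _); apply: eq_big_nat => l lt_l.
  by rewrite ifT ?mulrA //; lia.
by rewrite ifF //; lia.
Qed.

Hypothesis n_gt1 : (1 < n)%N.
Hypothesis k1_neq0 : k 1%N != 0.
Hypothesis c_neq0 : forall i : nat, (1 <= i <= n)%N -> c i != 0.

Lemma cc_neq0 i : (i <= n)%N -> c i != 0.
Proof. by case: i => [|i] le_in; [rewrite oner_neq0 | apply: c_neq0]. Qed.

Lemma prod_cc_neq0 s t : (t <= n.+1)%N -> \prod_(s <= nu < t) c nu != 0.
Proof.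
move=> le_t; rewrite prodf_seq_neq0; apply/allP => nu.
by rewrite mem_index_iota => lt_nu; apply: cc_neq0; lia.
Qed.

Section Column.
Variable j : nat.
Hypothesis j_gt0 : (0 < j)%N.
Hypothesis le_jn : (j <= n)%N.

Local Notation v := (fun l => alpha l j).

Lemma alpha_pred : alpha j.-1 j = - (c j.-1)^-1.
Proof. by rewrite -{2}(prednK j_gt0) alpha_superdiag. Qed.

Lemma tailb_alpha_below m : (j < m <= n)%N ->
  tailb v m = (-1) ^+ (m + j) * d j.-1
    * (\prod_(j.+1 <= nu < m) (k nu * f nu)) / \prod_(j.-1 <= nu < m) c nu.
Proof.
move=> lt_m; move def_t: (n - m)%N => t.
elim: t m lt_m def_t => [|t IHt] m lt_m def_t.
  have -> : m = n by lia.
  have bn_neq0 : b n != 0 by rewrite -cc_n ?cc_neq0 //; lia.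
  have C_neq0 : \prod_(j.-1 <= nu < n) c nu != 0 by apply: prod_cc_neq0.
  rewrite tailb_cons // tailb_end alpha_below ?gg_n ?big_nat_recr /= ?cc_n //; try lia.
  by field; rewrite bn_neq0 C_neq0.
have cm_neq0 : c m != 0 by apply: cc_neq0; lia.
have C_neq0 : \prod_(j.-1 <= nu < m) c nu != 0 by apply: prod_cc_neq0; lia.
rewrite ccE in cm_neq0; last lia.
rewrite tailb_cons ?IHt ?alpha_below ?ggE ?addSn ?exprS; try lia.
rewrite !big_nat_recr /= ?ccE /ff; try lia.
by field; rewrite cm_neq0 C_neq0.
Qed.

Lemma tailb_alpha_succ : (j < n)%N -> tailb v j.+1 = - d j.-1 / (c j.-1 * c j).
Proof.
move=> lt_jn; rewrite tailb_alpha_below; last lia.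
rewrite addSn exprS exprD -expr2 sqrr_sign mulr1 big_geq // mulr1.
have -> : j.+1 = j.-1.+2 by lia.
by rewrite big_nat_recr //= big_nat1 prednK // mulN1r.
Qed.

Lemma tailb_alpha_diag : (1 < j)%N -> tailb v j = b j.-1 / c j.-1.
Proof.
move=> j_gt1; have cj1_neq0 : c j.-1 != 0 by apply: cc_neq0; lia.
have cj_neq0 : c j != 0 by apply: cc_neq0.
rewrite tailb_cons //=; have [lt_jn | ge_jn] := ltnP j n.
  rewrite tailb_alpha_succ // alpha_diag ?dd_gt0; try lia.
  rewrite ccE in cj_neq0 *; last lia.
  rewrite ccE in cj1_neq0 *; last lia.
  rewrite prednK in cj1_neq0 *; last lia.
  by field; rewrite cj1_neq0 cj_neq0.
have def_j : j = n by lia.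
rewrite def_j in cj_neq0 cj1_neq0 *.
rewrite alpha_nn // tailb_end cc_n in cj_neq0 *; last lia.
by field; rewrite cj1_neq0 cj_neq0.
Qed.

Lemma tailb_alpha_above l : (0 < l < j)%N -> tailb v l = 0.
Proof.
move=> lt_l; move def_t: (j.-1 - l)%N => t.
elim: t l lt_l def_t => [|t IHt] l lt_l def_t.
  have def_l : l = j.-1 by lia.
  have cj1_neq0 : c j.-1 != 0 by apply: cc_neq0; lia.
  rewrite def_l tailb_cons /= ?alpha_pred ?prednK ?tailb_alpha_diag; try lia.
  by field.
rewrite tailb_cons /= ?alpha_far_above ?mulr0 ?add0r ?IHt //; lia.
Qed.

Lemma sum_alpha_above i : (i < j)%N -> \sum_(1 <= l < i) k l * a l * v l = 0.
Proof.
move=> lt_ij; rewrite big1_seq // => l /andP[_]; rewrite mem_index_iota => lt_l.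
by rewrite /= alpha_far_above ?mulr0 //; lia.
Qed.

Lemma rowA1_alpha_above i : (0 < i < j)%N -> rowA1 v i = 0.
Proof.
by move=> lt_i; rewrite /rowA1 tailb_alpha_above ?sum_alpha_above ?mulr0 ?addr0 //; lia.
Qed.

Lemma rowA1_alpha_diag : rowA1 v j = 1.
Proof.
have [j_eq1 | j_gt1] := eqVneq j 1%N.
  have c1_neq0 : c 1%N != 0 by apply: cc_neq0; lia.
  have tailb2 := tailb_alpha_succ; rewrite j_eq1 in tailb2 *.
  rewrite rowA1_1 tailb_cons /=; last lia.
  rewrite alpha_11 tailb2 // ccE in c1_neq0 *; last lia.
  by rewrite /dd /cc /=; field; rewrite c1_neq0 k1_neq0.
have cj1_neq0 : c j.-1 != 0 by apply: cc_neq0; lia.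
have def_j : j = j.-1.+1 by lia.
rewrite /rowA1 [in X in \sum_(_ <= _ < X) _]def_j big_nat_recr /=; last lia.
rewrite sum_alpha_above ?alpha_pred ?tailb_alpha_diag; try lia.
rewrite ccE in cj1_neq0 *; last lia.
rewrite prednK in cj1_neq0 *; last lia.
by field.
Qed.

Lemma row_step_alpha_diag : (j < n)%N -> g j * tailb v j.+1 + k j * f j * v j = -1.
Proof.
move=> lt_jn; have cj_neq0 : c j != 0 by apply: cc_neq0.
rewrite tailb_alpha_succ // ggE //= /ff.
have [j_eq1 | j_gt1] := eqVneq j 1%N.
  rewrite j_eq1 alpha_11 in cj_neq0 *.
  rewrite ccE in cj_neq0 *; last lia.
  by rewrite /dd /cc /=; field; rewrite cj_neq0 k1_neq0.
have cj1_neq0 : c j.-1 != 0 by apply: cc_neq0; lia.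
rewrite alpha_diag ?dd_gt0; try lia.
rewrite ccE in cj_neq0 *; last lia.
rewrite ccE in cj1_neq0 *; last lia.
rewrite prednK in cj1_neq0 *; last lia.
by field; rewrite cj1_neq0 cj_neq0.
Qed.

Lemma row_step_alpha_below i : (j < i < n)%N ->
  g i * tailb v i.+1 + k i * f i * v i = 0.
Proof.
move=> lt_i; rewrite tailb_alpha_below /= ?alpha_below; try lia.
by rewrite big_nat_recr /= 1?addSn 1?exprS; [ring | lia].
Qed.

Lemma rowA1_alpha_below i : (j < i <= n)%N -> rowA1 v i = 0.
Proof.
elim: i => [|i IHi] lt_i; first lia.
rewrite rowA1S; last lia.
have [lt_ji | le_ij] := ltnP j i.
  by rewrite IHi -?addrA ?row_step_alpha_below ?addr0 //; lia.
have -> : i = j by lia.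
by rewrite rowA1_alpha_diag -addrA row_step_alpha_diag ?subrr //; lia.
Qed.

Lemma rowA1_alpha i : (0 < i <= n)%N -> rowA1 v i = (i == j)%:R.
Proof.
move=> lt_i; have [lt_ij | lt_ji | ->] := ltngtP i j.
- by rewrite rowA1_alpha_above //; lia.
- by rewrite rowA1_alpha_below //; lia.
- by rewrite rowA1_alpha_diag.
Qed.

End Column.

Lemma mulmx_A1_alpha : A1 n k a b *m alpha_mx n k a b = 1%:M.
Proof.
apply/matrixP => i j; rewrite !mxE.
under eq_bigr => l _ do rewrite [alpha_mx _ _ _ _ l j]mxE.
have /= -> := mulA1E (fun l => alpha l j.+1) i.
by rewrite rowA1_alpha ?ltn_ord.
Qed.

End A1Inverse.

Theorem mainTheorem1 (R : numFieldType) (n : nat) (k a b : nat -> R) :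
  (2 <= n)%N ->
  k 1%N != 0 ->
  (forall i : nat, (1 <= i <= n)%N -> cc n k a b i != 0) ->
  [/\ A1 n k a b \in unitmx,
      lower_hessenberg (invmx (A1 n k a b)) &
      invmx (A1 n k a b) = alpha_mx n k a b].
Proof.
move=> n_gt1 k1_neq0 c_neq0.
have A1_alpha := mulmx_A1_alpha _ _ _ _ _ n_gt1 k1_neq0 c_neq0.
have [A1_unit _] := mulmx1_unit A1_alpha.
have inv_A1 : invmx (A1 n k a b) = alpha_mx n k a b.
  by rewrite -[LHS]mulmx1 -A1_alpha mulKmx.
by rewrite inv_A1; split=> //; apply: alpha_mx_lower_hessenberg.
Qed.
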